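(* Let $k\ge1$, $n\ge 2k+1$, $g:=\gcd(n,k)$, and $r\in\{0,\dots,n-1\}$. Take the symmetric difference of the union of the edge sets of the $g$ cycles $C(s_0),\dots,C(s_{g-1})$ with the edge sets of the $4$-cycles $(s_{r+j},s_{r+j+k},s_{r+j+2k+1},s_{r+j+k+1})$ for $j=0,\dots,g-2$. The result is the edge set of a single cycle in $K(n,k)$ on the vertex set $\{s_0,\dots,s_{n-1}\}$.
   Context: Vertices of $K(n,k)$ are binary strings of length $n$ with $k$ ones, adjacent iff they have no $1$ at a common position. $\sigma^i$ denotes cyclic right shift by $i$ positions. For $i\in\mathbb{Z}$ (indices mod $n$), $s_i:=\sigma^i(1^k0^{n-k})$. For $x$ such a string, $f(x)$ is obtained by cyclic parenthesis matching ($1$s opening, $0$s closing brackets, each $1$ at position $i$ matched to the last $0$ of the shortest cyclic substring starting at $i$ going right with equally many $0$s and $1$s) and complementing all matched bits; $C(x)=(x,f(x),f^2(x),\dots)$ until $x$ reappears. (One has $f(s_i)=s_{i+k}$, so $C(s_i)=(s_{i+kj})_{j=0,\dots,n/g-1}$ and the cycles $C(s_0),\dots,C(s_{g-1})$ are distinct and partition $\{s_0,\dots,s_{n-1}\}$.) *)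

From mathcomp Require Import all_boot.
Set Implicit Arguments. Unset Strict Implicit. Unset Printing Implicit Defensive.

Definition word (n : nat) := {ffun 'I_n -> bool}.

Definition getb n (x : word n) (m : nat) : bool :=
  if (insub (m %% n) : option 'I_n) is Some j then x j else false.

Definition weight n (x : word n) : nat := #|[set j | x j]|.

Definition kneser_adj n k (x y : word n) : bool :=
  [&& weight x == k, weight y == k & [forall j, ~~ (x j && y j)]].

(* cyclic right shift sigma: new bit at j is old bit at j-1 *)
Definition sigma n (x : word n) : word n := [ffun j : 'I_n => getb x (j + n - 1)].

Definition sv n k (i : nat) : word n := iter i (@sigma n) [ffun j : 'I_n => j < k].

(* cyclic parenthesis matching *)
Definition ones n (x : word n) (i l : nat) : nat := count (fun t => getb x (i + t)) (iota 0 l).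
Definition balanced n (x : word n) (i l : nat) : bool := (0 < l) && (ones x i l * 2 == l).
Definition has_match n (x : word n) (i : nat) : bool := has (balanced x i) (iota 1 n).
Definition mlen n (x : word n) (i : nat) : nat :=
  nth 0 (iota 1 n) (find (balanced x i) (iota 1 n)).
(* position j is matched: either a 1 with a match, or the last 0 of the
   shortest balanced substring starting at some matched 1 *)
Definition matched n (x : word n) (j : 'I_n) : bool :=
  (x j && has_match x j) ||
  [exists i : 'I_n, [&& x i, has_match x i & (i + mlen x i).-1 %% n == j]].
Definition fmap n (x : word n) : word n :=
  [ffun j => if matched x j then ~~ x j else x j].

Definition cycle_edges n (x : word n) : {set {set word n}} :=
  [set [set y; fmap y] | y in orbit (@fmap n) x].

Definition quad_edges n (a b c d : word n) : {set {set word n}} :=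
  [set [set a; b]; [set b; c]; [set c; d]; [set d; a]].

Definition symdiff (T : finType) (A B : {set T}) : {set T} := (A :\: B) :|: (B :\: A).

Definition result_edges n k r : {set {set word n}} :=
  let g := gcdn n k in
  foldl (fun E j => symdiff E (quad_edges (sv n k (r + j)) (sv n k (r + j + k))
                                           (sv n k (r + j + 2 * k + 1)) (sv n k (r + j + k + 1))))
        (\bigcup_(i < g) cycle_edges (sv n k i)) (iota 0 g.-1).

Definition seq_cycle_edges n (c : seq (word n)) : {set {set word n}} :=
  [set [set y; next c y] | y in c].

From mathcomp Require Import all_boot zify.
Set Implicit Arguments. Unset Strict Implicit. Unset Printing Implicit Defensive.

(* Let [s_i] be the word whose ones form the cyclic block of positions
   [i, ..., i+k-1] (mod [n]), and [g = gcd(n,k)].  The proof has three parts.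
   - Cyclic sequences (generic): the edge set of a cycle, and the fact that the
     symmetric difference of the edge sets of two vertex-disjoint cycles with a
     4-cycle made of an edge [{a,b}] of the first, an edge [{c,d}] of the second
     and the crossing edges [{b,c}], [{d,a}] is the edge set of one cycle.
   - Blocks: [s_a = s_b] iff [a = b] (mod [n]); [s_a], [s_(a+d)] are adjacent in
     [K(n,k)] when [k <= d <= n-k]; the parenthesis matching of [s_i] matches
     exactly the offsets below [2k], so [f(s_i) = s_(i+k)] and [C(s_x)] lists
     the words [s_(x+tk)].  By Bezout each [a] is [r + i + tk] (mod [n]) for a
     unique [i < g], so the class cycles [C(s_(r+i))], [i < g], partition the
     [s_a], and together they carry all the edges [{s_a, s_(a+k)}].
   - Merging: by induction on [J < g], after the 4-cycles [0..J-1] the edge set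
     is one cycle through the classes [0..J] plus the untouched classes.  The
     [J]-th 4-cycle [(s_(r+J), s_(r+J+k), s_(r+J+2k+1), s_(r+J+k+1))] has its
     first edge on the current cycle and its third on class [J+1], so it joins
     them; the theorem is the case [J = g-1]. *)

Lemma count_lt_iota c l : count (fun t => t < c) (iota 0 l) = minn l c.
Proof.
elim: l => [|l IH]; first by rewrite min0n.
rewrite -addn1 iotaD count_cat IH /= add0n addn0.
by case: (ltnP l c) => h; lia.
Qed.

Lemma find_first (T : Type) (a : pred T) (s : seq T) x0 i :
  i < size s -> a (nth x0 s i) -> (forall j, j < i -> ~~ a (nth x0 s j)) ->
  find a s = i.
Proof.
elim: s i => [|y s IH] [|i] //=; first by move=> _ ->.
move=> lt_i ai before; rewrite (negbTE (before 0 isT)); congr _.+1.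
by apply: IH => // j ji; apply: (before j.+1).
Qed.

Lemma prev_head (T : eqType) (y : T) s : y \notin s -> prev (y :: s) y = last y s.
Proof.
rewrite /=; elim: s {4 5}y => [|z s IH] w /=; first by rewrite eqxx.
by rewrite inE negb_or eq_sym => /andP [/negbTE -> /IH].
Qed.

Lemma set2_inj (T : finType) (a b x y : T) :
  [set a; b] = [set x; y] -> (a = x /\ b = y) \/ (a = y /\ b = x).
Proof.
move=> ab_xy; have y_ab : y \in [set a; b] by rewrite ab_xy set22.
have x_ab : x \in [set a; b] by rewrite ab_xy set21.
have /set2P[ax|ay] : a \in [set x; y] by rewrite -ab_xy set21.
all: have /set2P[bx|by_] : b \in [set x; y] by rewrite -ab_xy set22.
all: move: x_ab y_ab => /set2P x_ab /set2P y_ab; intuition congruence.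
Qed.

(* Cycles are duplicate-free sequences, read cyclically. *)
Section CycleEdges.
Variable T : finType.
Implicit Types (c s : seq T) (x y : T) (e : {set T}).

Definition cedges c : {set {set T}} := [set [set y; next c y] | y in c].

Fixpoint pedges x s : {set {set T}} :=
  if s is y :: s' then [set x; y] |: pedges y s' else set0.

Lemma pedges_cat x s1 s2 : pedges x (s1 ++ s2) = pedges x s1 :|: pedges (last x s1) s2.
Proof. by elim: s1 x => [|y s IH] x /=; [rewrite set0U | rewrite IH setUA]. Qed.

Lemma pedges_vertex x s e z : e \in pedges x s -> z \in e -> z \in x :: s.
Proof.
elim: s x => [|y s IH] x /=; first by rewrite inE.
rewrite !inE => /orP [/eqP -> | /IH he] /=; last by move/he; rewrite inE => ->; rewrite orbT.
by rewrite !inE => /orP [] ->; rewrite ?orbT.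
Qed.

Lemma pedges_fpath (f : T -> T) x p : fpath f x p ->
  pedges x p = [set [set y; f y] | y in belast x p].
Proof.
elim: p x => [|y p IH] x /=.
  by move=> _; apply/setP => e; rewrite inE; apply/esym/imsetP => -[].
case/andP => /eqP <- /IH ->; apply/setP => e; rewrite !inE.
apply/orP/imsetP => [[/eqP -> | /imsetP [z zp ->]]|[z]].
- by exists x; rewrite ?inE ?eqxx.
- by exists z; rewrite // inE zp orbT.
- by rewrite inE => /orP [/eqP -> -> | zp ->]; [left | right; apply/imsetP; exists z].
Qed.

Lemma cedges_path x s : uniq (x :: s) ->
  cedges (x :: s) = [set last x s; x] |: pedges x s.
Proof.
move=> uxs; have : fpath (next (x :: s)) x (rcons s x) by exact: cycle_next uxs.
by move/pedges_fpath; rewrite belast_rcons -cats1 pedges_cat /= setU0 setUC => ->.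
Qed.

Lemma set2_sub (A : seq T) x y : ([set x; y] \subset A) = (x \in A) && (y \in A).
Proof.
apply/subsetP/andP => [sub|[xA yA] z]; first by rewrite !sub ?set21 ?set22.
by case/set2P => ->.
Qed.

Lemma cedges_sub c e : e \in cedges c -> e \subset c.
Proof. by case/imsetP => y yc ->; rewrite set2_sub yc mem_next. Qed.

Lemma pedges_sub x s e : e \in pedges x s -> e \subset x :: s.
Proof. by move=> es; apply/subsetP => z /(pedges_vertex es). Qed.

Lemma closing_notin_path x s : uniq (x :: s) -> 1 < size s ->
  [set last x s; x] \notin pedges x s.
Proof.
case: s => // y s uxs; rewrite ltnS lt0n size_eq0 => s_nil.
move: uxs; rewrite /= inE negb_or => /andP [/andP [xy x_s] /andP [y_s _]].
rewrite !inE negb_or; apply/andP; split.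
  apply/eqP => /set2_inj [[lx _]|[ly _]].
    by have := mem_last y s; rewrite lx inE (negbTE xy) (negbTE x_s).
  case: s s_nil x_s y_s ly => // z s _ _ /= /negP y_zs ly.
  by apply: y_zs; rewrite -ly mem_last.
apply/negP => /pedges_vertex /(_ (set22 _ _)).
by rewrite inE (negbTE xy) (negbTE x_s).
Qed.

Lemma symdiff_cancel (W P X : {set {set T}}) :
  {in P, forall e, e \notin W :|: X} -> {in X, forall e, e \notin W :|: P} ->
  symdiff (W :|: P) (W :|: X) = P :|: X.
Proof.
move=> dP dX; apply/setP => e; rewrite /symdiff !inE.
case eP: (e \in P); case eX: (e \in X).
- by have := dP e eP; rewrite !inE eX orbT.
- by have := dP e eP; rewrite !inE => /norP [/negbTE -> _].
- by have := dX e eX; rewrite !inE => /norP [/negbTE -> _].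
- by case: (e \in W).
Qed.

(* Joining two vertex-disjoint cycles [h1 .. l1] and [h2 .. l2] through the
   4-cycle [(l1, h1, l2, h2)]: the symmetric difference of their edge sets with
   the 4-cycle replaces the closing edges [{l1,h1}], [{l2,h2}] by the crossing
   edges [{l1,h2}], [{l2,h1}], giving the concatenated cycle. *)
Lemma cedges_merge h1 s1 h2 s2 : uniq ((h1 :: s1) ++ (h2 :: s2)) ->
  1 < size s1 -> 1 < size s2 ->
  cedges ((h1 :: s1) ++ (h2 :: s2)) =
  symdiff (cedges (h1 :: s1) :|: cedges (h2 :: s2))
    [set [set last h1 s1; h1]; [set last h2 s2; h2];
         [set last h1 s1; h2]; [set last h2 s2; h1]].
Proof.
move=> u12 size1 size2; move: (u12); rewrite cat_uniq => /and3P [u1 /hasPn disj u2].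
set c1 := h1 :: s1; set c2 := h2 :: s2; set l1 := last h1 s1; set l2 := last h2 s2.
have l1c1 : l1 \in c1 := mem_last h1 s1.
have l2c2 : l2 \in c2 := mem_last h2 s2.
have h1c1 : h1 \in c1 := mem_head h1 s1.
have h2c2 : h2 \in c2 := mem_head h2 s2.
have out1 z : z \in c2 -> z \notin c1 := disj z.
have out2 z : z \in c1 -> z \notin c2 by apply: contraTN => /disj.
pose W := [set [set l1; h1]; [set l2; h2]].
pose X := [set [set l1; h2]; [set l2; h1]].
pose P := pedges h1 s1 :|: pedges h2 s2.
have catE : cedges (c1 ++ c2) = P :|: X.
  rewrite /c1 cat_cons cedges_path // last_cat /= pedges_cat /=.
  by apply/setP => e; rewrite /P /X !inE; do ?case: (_ \in _); do ?case: (_ == _).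
have partsE : cedges c1 :|: cedges c2 = W :|: P.
  rewrite !cedges_path //; apply/setP => e; rewrite /P /W !inE.
  by do ?case: (_ \in _); do ?case: (_ == _).
have quadE : [set [set l1; h1]; [set l2; h2]; [set l1; h2]; [set l2; h1]] = W :|: X.
  by apply/setP => e; rewrite /W /X !inE; do ?case: (_ == _).
have cross_out a b : a \in c1 -> b \in c2 -> [set a; b] \notin W :|: P.
  move=> ac1 bc2; apply/negP; rewrite -partsE => /setUP [] /cedges_sub /subsetP sub.
    by have := sub b (set22 a b); apply/negP/out1.
  by have := sub a (set21 a b); apply/negP/out2.
rewrite catE partsE quadE symdiff_cancel // => e; last first.
  by case/set2P => ->; [| rewrite setUC]; apply: cross_out.
rewrite !inE -!orbA => /orP [] eP; have := pedges_sub eP;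
  apply/contraL => /or4P [] /eqP E; rewrite {}E in eP *.
- by rewrite (negbTE (closing_notin_path u1 size1)) in eP.
- by apply/subsetPn; exists l2; [exact: set21 | exact: out1].
- by apply/subsetPn; exists h2; [exact: set22 | exact: out1].
- by apply/subsetPn; exists l2; [exact: set21 | exact: out1].
- by apply/subsetPn; exists l1; [exact: set21 | exact: out2].
- by rewrite (negbTE (closing_notin_path u2 size2)) in eP.
- by apply/subsetPn; exists l1; [exact: set21 | exact: out2].
- by apply/subsetPn; exists h1; [exact: set22 | exact: out2].
Qed.

Lemma cedges_rot i c : uniq c -> cedges (rot i c) = cedges c.
Proof.
move=> uc; apply/setP => e; apply/imsetP/imsetP => -[y yc ->]; exists y;
  by rewrite ?next_rot // mem_rot in yc *.
Qed.

Lemma cedges_rev c : uniq c -> cedges (rev c) = cedges c.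
Proof.
move=> uc; apply/setP => e; apply/imsetP/imsetP => -[y yc ->].
  exists (prev c y); first by rewrite mem_prev -mem_rev.
  by rewrite next_rev // next_prev // setUC.
exists (next c y); first by rewrite mem_rev mem_next.
by rewrite next_rev // prev_next // setUC.
Qed.

Lemma rot_to_next c y : uniq c -> y \in c ->
  exists s, [/\ perm_eq (next c y :: s) c, cedges (next c y :: s) = cedges c
              & last (next c y) s = y].
Proof.
move=> uc yc; have nyc : next c y \in c by rewrite mem_next.
have [i s rot_c] := rot_to nyc.
have us : uniq (next c y :: s) by rewrite -rot_c rot_uniq.
exists s; rewrite -rot_c perm_rot cedges_rot //; split => //.
move: us => /= /andP [ns _]; rewrite -(prev_head ns) -rot_c.
by rewrite prev_rot // prev_next.
Qed.

Lemma cycle_through_edge c a b : uniq c -> [set a; b] \in cedges c ->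
  exists s, [/\ perm_eq (b :: s) c, cedges (b :: s) = cedges c & last b s = a].
Proof.
move=> uc /imsetP [y yc /set2_inj [[-> ->]|[-> ->]]]; first exact: rot_to_next.
have urc : uniq (rev c) by rewrite rev_uniq.
have nyc : next c y \in rev c by rewrite mem_rev mem_next.
have [s [perm_s cedges_s last_s]] := rot_to_next urc nyc.
rewrite next_rev // prev_next // in perm_s cedges_s last_s.
have rev_c : perm_eq (rev c) c by rewrite perm_rev.
by exists s; rewrite (perm_trans perm_s rev_c) cedges_s cedges_rev.
Qed.

End CycleEdges.

Lemma symdiffUl (T : finType) (A B C : {set T}) :
  {in C, forall e, e \notin B} -> symdiff (A :|: B) C = symdiff A C :|: B.
Proof.
move=> CB; apply/setP => e; rewrite /symdiff !inE.
by case eC: (e \in C); [have := CB e eC; case: (e \in B) | case: (e \in B)];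
  rewrite ?andbF ?andbT ?orbF ?orbT.
Qed.

Lemma mem_foldl_symdiff (T : finType) (A : {set T}) (B : nat -> {set T}) l e :
  e \in foldl (fun E j => symdiff E (B j)) A l -> e \in A \/ exists2 j, j \in l & e \in B j.
Proof.
elim: l A => [|j l IH] A /=; first by left.
case/IH => [|[j' j'l eB]]; last by right; exists j' => //; rewrite inE j'l orbT.
rewrite /symdiff !inE => /orP [] /andP [eA eB]; first by left.
by right; exists j; rewrite ?inE ?eqxx.
Qed.

Section ResidueClasses.
Variables n k : nat.
Hypothesis n_gt0 : 0 < n.
Hypothesis k_gt0 : 0 < k.
Local Notation g := (gcdn n k).

(* Modulo [n], every [a] is reached from [q] by [i < g] steps of [1] and some
   steps of [k] (Bezout). *)
Lemma residue_class q a : exists i t, i < g /\ a = q + i + t * k %[mod n].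
Proof.
have [u v Bezout _] := egcdnP n k_gt0; rewrite gcdnC in Bezout.
set D := a + (n - q %% n).
exists (D %% g), (D %/ g * u); split; first by rewrite ltn_mod gcdn_gt0 n_gt0.
have bezout_D : D %/ g * u * k = D %/ g * v * n + D %/ g * g.
  by rewrite -mulnA Bezout mulnDr mulnA.
have div_D := divn_eq D g.
have div_q := divn_eq q n.
have mod_q := ltn_pmod q n_gt0.
have -> : q + D %% g + D %/ g * u * k = (D %/ g * v + q %/ n + 1) * n + a.
  by rewrite bezout_D /D; rewrite /D in div_D; lia.
by rewrite modnMDl.
Qed.

Lemma residue_class_unique q i i' t t' : i < g -> i' < g ->
  q + i + t * k = q + i' + t' * k %[mod n] -> i = i'.
Proof.
have gn : g %| n := dvdn_gcdl n k.
have gk : g %| k := dvdn_gcdr n k.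
move: g gn gk => G Gn /dvdnP [m ->] iG i'G /(congr1 (modn^~ G)) /=.
rewrite !modn_dvdm // !mulnA -!(addnC (_ * G)) !modnMDl => /eqP.
by rewrite eqn_modDl !modn_small // => /eqP.
Qed.

End ResidueClasses.

Section CyclicWords.
Variables n k : nat.
Hypothesis n_gt0 : 0 < n.
Local Notation S := (sv n k).

Lemma getbE (x : word n) p : getb x p = x (Ordinal (ltn_pmod p n_gt0)).
Proof.
rewrite /getb; case: insubP => [j _ hj|]; last by rewrite ltn_pmod.
by congr (x _); apply/val_inj.
Qed.

Lemma getb_ord (x : word n) (j : 'I_n) : getb x j = x j.
Proof. by rewrite getbE; congr (x _); apply/val_inj; rewrite /= modn_small. Qed.

Lemma eqmod_small a b : a < n -> b < n -> a = b %[mod n] -> a = b.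
Proof. by move=> ha hb; rewrite !modn_small. Qed.

Lemma offset_exists c p : exists2 u, u < n & p = c + u %[mod n].
Proof.
exists ((p + (n - c %% n)) %% n); first exact: ltn_pmod.
rewrite modnDmr.
have -> : c + (p + (n - c %% n)) = (c %/ n + 1) * n + p.
  by have := ltn_pmod c n_gt0; have := divn_eq c n; lia.
by rewrite modnMDl.
Qed.

Lemma getb_sv_block i p : getb (S i) p = [exists t : 'I_k, (i + t) %% n == p %% n].
Proof.
elim: i p => [|i IH] p.
  rewrite getbE /sv /= ffunE /=; apply/idP/existsP => [h|[t /eqP]].
    by exists (Ordinal h); rewrite add0n modn_mod.
  by rewrite add0n => <-; exact: leq_ltn_trans (leq_mod _ _) (ltn_ord t).
rewrite getbE /sv iterS -/(sv n k i) /sigma ffunE IH /=.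
apply: eq_existsb => t.
rewrite -(eqn_modDr 1) (_ : i + t + 1 = i.+1 + t); last lia.
rewrite subnK ?(leq_trans n_gt0 (leq_addl _ _)) //.
by rewrite modnDr modn_mod.
Qed.

Lemma getb_sv c p u : p = c + u %[mod n] -> u < n -> getb (S c) p = (u < k).
Proof.
move=> hp hu; rewrite getb_sv_block hp; apply/existsP/idP => [[t]|h].
  rewrite eqn_modDl (modn_small hu) => /eqP <-.
  exact: leq_ltn_trans (leq_mod _ _) (ltn_ord t).
by exists (Ordinal h).
Qed.

End CyclicWords.
Arguments getb_sv_block {n k} n_gt0 i p.
Arguments getb_sv {n k} n_gt0 {c p u}.

Lemma kneser_adj_sym n k (x y : word n) : kneser_adj k x y = kneser_adj k y x.
Proof.
rewrite /kneser_adj andbCA; congr (_ && (_ && _)).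
by apply: eq_forallb => j; rewrite andbC.
Qed.

Definition kneser_edge n k (e : {set word n}) : Prop :=
  exists x y, e = [set x; y] /\ kneser_adj k x y.

(* The 4-cycle [(a,b,c,d)] listed as in the merging lemma [cedges_merge]. *)
Lemma quad_edges_merge n (a b c d : word n) :
  [set [set a; b]; [set c; d]; [set a; d]; [set c; b]] = quad_edges a b c d.
Proof.
rewrite /quad_edges [[set a; d]]setUC [[set c; b]]setUC.
by apply/setP => e; rewrite !inE; do ?case: (_ == _).
Qed.

(* [lia] is slow on hypotheses involving [%%]; clear them first. *)
Ltac lia_nomod := repeat match goal with H : context [modn] |- _ => clear H end; lia.

Section ShiftedBlocks.
Variables n k : nat.
Hypothesis k_gt0 : 0 < k.
Hypothesis two_k_lt_n : 2 * k < n.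
Local Notation S := (sv n k).

Lemma n_gt0 : 0 < n. Proof. exact: leq_ltn_trans (leq0n _) two_k_lt_n. Qed.

Lemma getb_sv_first c : getb (S c) c.
Proof. by rewrite (@getb_sv _ _ n_gt0 c c 0) ?addn0 // n_gt0. Qed.

Lemma sv_eq a b : (S a == S b) = (a == b %[mod n]).
Proof.
apply/eqP/eqP => [Sab|ab]; last first.
  apply/ffunP => j; rewrite -!(getb_ord n_gt0) !(getb_sv_block n_gt0).
  by apply: eq_existsb => t; rewrite -modnDml ab modnDml.
have [u un bu] := offset_exists n_gt0 a b.
have uk : u < k by rewrite -(getb_sv n_gt0 bu un) Sab getb_sv_first.
have [u0|u_gt0] := posnP u; first by rewrite bu u0 addn0.
(* otherwise [s_b] would miss position [a], which lies at offset [n - u >= k] *)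
have au : a = b + (n - u) %[mod n].
  by rewrite -modnDml bu modnDml -addnA subnKC ?modnDr // ltnW.
have := getb_sv_first a; rewrite Sab (getb_sv n_gt0 au) ?leq_subr //; last lia.
by move=> nuk; lia.
Qed.

Lemma sv_mod a : S a = S (a %% n).
Proof. by apply/eqP; rewrite sv_eq modn_mod. Qed.

Lemma sv_neq a s : 0 < s < n -> S a != S (a + s).
Proof.
case/andP=> s_gt0 sn; rewrite sv_eq -{1}[a]addn0 eqn_modDl mod0n modn_small //.
by rewrite eq_sym -lt0n.
Qed.

Lemma weight_sv a : weight (S a) = k.
Proof.
pose pos (t : 'I_k) := Ordinal (ltn_pmod (a + t) n_gt0).
rewrite /weight; have -> : [set j | S a j] = [set pos t | t : 'I_k].
  apply/setP => j; rewrite inE -(getb_ord n_gt0) (getb_sv_block n_gt0).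
  apply/existsP/imsetP => [[t /eqP ht]|[t _ ->]]; last by exists t; rewrite /= modn_mod.
  by exists t => //; apply/val_inj; rewrite /= ht modn_small.
rewrite card_imset ?card_ord // => t t' /(congr1 val) /= /eqP.
rewrite eqn_modDl => /eqP /eqmod_small tt'; apply/val_inj/tt'.
  by have := ltn_ord t; lia.
by have := ltn_ord t'; lia.
Qed.

Lemma adj_sv a d : k <= d -> d + k <= n -> kneser_adj k (S a) (S (a + d)).
Proof.
move=> kd dkn; rewrite /kneser_adj !weight_sv eqxx /=; apply/forallP => j.
have [u un ju] := offset_exists n_gt0 a j.
rewrite -!(getb_ord n_gt0) (getb_sv n_gt0 ju un); apply/nandP.
have [uk|_] := ltnP u k; [right | by left].
have ju' : nat_of_ord j = a + d + (u + (n - d)) %[mod n].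
  by rewrite ju (_ : a + d + _ = a + u + n) ?modnDr //; lia.
by rewrite (getb_sv n_gt0 ju') -?leqNgt; lia.
Qed.

Section Matching.
Variable i : nat.

Lemma ones_sv p u l : p = i + u %[mod n] -> u < k -> l <= 2 * (k - u) ->
  ones (S i) p l = minn l (k - u).
Proof.
move=> pu uk l_le; rewrite /ones -count_lt_iota; apply: eq_in_count => t.
rewrite mem_iota add0n => /andP [_ tl].
rewrite (@getb_sv _ _ n_gt0 i (p + t) (u + t)); first by apply/idP/idP; lia_nomod.
  by rewrite -modnDml pu modnDml addnA.
lia_nomod.
Qed.

Lemma mlen_sv p u : p = i + u %[mod n] -> u < k ->
  has_match (S i) p /\ mlen (S i) p = 2 * (k - u).
Proof.
move=> pu uk.
have first : find (balanced (S i) p) (iota 1 n) = (2 * (k - u)).-1.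
  apply: (find_first (x0 := 0)); first by rewrite size_iota; lia_nomod.
    rewrite nth_iota; last lia_nomod.
    rewrite /balanced (ones_sv pu uk); last lia_nomod.
    by apply/andP; split; [lia_nomod | apply/eqP; lia_nomod].
  move=> j j_lt; rewrite nth_iota; last lia_nomod.
  rewrite /balanced (ones_sv pu uk); last lia_nomod.
  by apply/negP => /andP [_ /eqP]; lia_nomod.
split; first by rewrite /has_match has_find first size_iota; lia_nomod.
by rewrite /mlen first nth_iota; lia_nomod.
Qed.

Lemma match_end p u : p = i + u %[mod n] -> u < k ->
  (p + 2 * (k - u)).-1 = i + (2 * k - 1 - u) %[mod n].
Proof.
move=> pu uk; rewrite (_ : (p + _).-1 = p + (2 * (k - u) - 1)); last lia_nomod.
by rewrite -modnDml pu modnDml; congr (_ %% _); lia_nomod.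
Qed.

Lemma matched_sv (j : 'I_n) u : nat_of_ord j = i + u %[mod n] -> u < n ->
  matched (S i) j = (u < 2 * k).
Proof.
move=> ju un; rewrite /matched -(getb_ord n_gt0) (getb_sv n_gt0 ju un).
have [uk|ku] := ltnP u k.
  by have [-> _] := mlen_sv ju uk; rewrite /=; lia_nomod.
apply/existsP/idP => [[i' /and3P [one _ end_j]]|u2k].
  have [u' u'n i'u'] := offset_exists n_gt0 i i'.
  have u'k : u' < k by rewrite -(getb_ord n_gt0) (getb_sv n_gt0 i'u' u'n) in one.
  have [_ mlen_i'] := mlen_sv i'u' u'k; rewrite mlen_i' in end_j.
  move: end_j; rewrite -(modn_small (ltn_ord j)) ju (match_end i'u' u'k).
  rewrite eqn_modDl => /eqP /eqmod_small u'u; clear -u'u un u'k two_k_lt_n.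
  have lt_n : 2 * k - 1 - u' < n by lia_nomod.
  by have := u'u lt_n un; lia_nomod.
have u'k : 2 * k - 1 - u < k by lia_nomod.
have pu' : (i + (2 * k - 1 - u)) %% n = i + (2 * k - 1 - u) %[mod n].
  by rewrite modn_mod.
exists (Ordinal (ltn_pmod (i + (2 * k - 1 - u)) n_gt0)) => /=.
have [-> ->] := mlen_sv pu' u'k.
rewrite -(getb_ord n_gt0) (getb_sv n_gt0 pu') /=; last lia_nomod.
rewrite u'k (match_end pu' u'k) -(modn_small (ltn_ord j)) ju.
by apply/eqP; congr (_ %% _); lia_nomod.
Qed.

Lemma fmap_sv : fmap (S i) = S (i + k).
Proof.
apply/ffunP => j; rewrite ffunE.
have [u un ju] := offset_exists n_gt0 i j.
rewrite (matched_sv ju un) -!(getb_ord n_gt0) (getb_sv n_gt0 ju un).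
have [uk|ku] := ltnP u k.
  have ju' : nat_of_ord j = i + k + (u + (n - k)) %[mod n].
    by rewrite ju (_ : i + k + _ = i + u + n) ?modnDr //; lia_nomod.
  rewrite (getb_sv n_gt0 ju'); last lia_nomod.
  have -> : u < 2 * k by lia_nomod.
  by apply/esym/negbTE; rewrite -leqNgt; lia_nomod.
have ju' : nat_of_ord j = i + k + (u - k) %[mod n].
  by rewrite ju; congr (_ %% _); lia_nomod.
rewrite (getb_sv n_gt0 ju') ?ltn_subLR // ?addnn -?mul2n; last lia_nomod.
by case: ltnP.
Qed.

End Matching.

Local Notation f := (@fmap n).

Lemma iter_fmap t x : iter t f (S x) = S (x + t * k).
Proof.
elim: t => [|t IH]; first by rewrite mul0n addn0.
by rewrite iterS IH fmap_sv // mulSnr addnA.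
Qed.

Lemma mem_orbit_sv x y : y \in orbit f (S x) <-> exists t, y = S (x + t * k).
Proof.
rewrite -fconnect_orbit; split => [xy|[t ->]]; last by rewrite -iter_fmap fconnect_iter.
by exists (findex f (S x) y); rewrite -iter_fmap iter_findex.
Qed.

(* [f] cycles through [C(s_x)], since [n] steps of [k] lead back to [s_x]. *)
Lemma fcycle_orbit_sv x : fcycle f (orbit f (S x)).
Proof.
have back : iter n.-1 f (S (x + k)) = S x.
  rewrite iter_fmap; apply/eqP; rewrite sv_eq // -addnA -mulSn (prednK n_gt0).
  by rewrite addnC mulnC modnMDl.
by rewrite -fconnect_f fmap_sv // -back fconnect_iter.
Qed.

Lemma next_orbit_sv x y : y \in orbit f (S x) -> next (orbit f (S x)) y = f y.
Proof. by move=> yo; have /eqP := next_cycle (fcycle_orbit_sv x) yo. Qed.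

Lemma size_orbit_sv x : 3 <= size (orbit f (S x)).
Proof.
have -> : 3 = size [:: S x; S (x + 1 * k); S (x + 2 * k)] by [].
apply: uniq_leq_size.
  rewrite /= !inE negb_or !sv_neq ?andbT; try lia.
  by rewrite (_ : x + 2 * k = x + 1 * k + k) ?sv_neq; lia.
by move=> y; rewrite !inE => /or3P [] /eqP ->; apply/mem_orbit_sv;
  [exists 0; rewrite addn0 | exists 1 | exists 2].
Qed.

Lemma cycle_edges_cedges x : cycle_edges (S x) = cedges (orbit f (S x)).
Proof. by apply: eq_in_imset => y /next_orbit_sv ->. Qed.

Lemma mem_cycle_edges x e :
  e \in cycle_edges (S x) <-> exists t, e = [set S (x + t * k); S (x + t * k + k)].
Proof.
split => [/imsetP [y /mem_orbit_sv [t ->] ->]|[t ->]]; first by exists t; rewrite fmap_sv.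
by apply/imsetP; exists (S (x + t * k)); [apply/mem_orbit_sv; exists t | rewrite fmap_sv].
Qed.

Lemma bigcup_cycle_edges q :
  \bigcup_(i < gcdn n k) cycle_edges (S (q + i)) = [set [set S a; S (a + k)] | a : 'I_n].
Proof.
apply/setP => e; apply/bigcupP/imsetP => [[i _ /mem_cycle_edges [t ->]]|[a _ ->]].
  exists (Ordinal (ltn_pmod (q + i + t * k) n_gt0)) => //=.
  by rewrite -sv_mod // [S (_ %% n + k)]sv_mod // modnDml -sv_mod.
have [i [t [ig a_it]]] := residue_class n_gt0 k_gt0 q a.
exists (Ordinal ig) => //; apply/mem_cycle_edges; exists t.
by congr [set _; _]; apply/eqP; rewrite sv_eq // ?eqn_modDr a_it.
Qed.

Lemma kneser_edge_sv a b d : b = a + d -> k <= d -> d + k <= n ->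
  kneser_edge k [set S a; S b].
Proof. by move=> -> kd dkn; exists (S a), (S (a + d)); split; last exact: adj_sv. Qed.

Section MergeClasses.
Variable r : nat.
Local Notation g := (gcdn n k).

Definition class_cycle i : seq (word n) := orbit f (S (r + i)).
Local Notation V := class_cycle.

Definition quad J : {set {set word n}} :=
  quad_edges (S (r + J)) (S (r + J + k)) (S (r + J + 2 * k + 1)) (S (r + J + k + 1)).

(* The edge set after the first [J] 4-cycles have been applied; for [J = g-1]
   this is [result_edges n k r]. *)
Definition partial_edges J : {set {set word n}} :=
  foldl (fun E j => symdiff E (quad j)) (\bigcup_(i < g) cycle_edges (S i)) (iota 0 J).

Definition later_edges J : {set {set word n}} := \bigcup_(i < g | J < i) cedges (V i).

Lemma partial_edgesS J : partial_edges J.+1 = symdiff (partial_edges J) (quad J).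
Proof. by rewrite /partial_edges -[J.+1]addn1 iotaD foldl_cat. Qed.

Lemma later_edgesS J : J.+1 < g -> later_edges J = cedges (V J.+1) :|: later_edges J.+1.
Proof.
move=> Jg; rewrite /later_edges (bigD1 (Ordinal Jg)) //=; congr (_ :|: _).
by apply: eq_bigl => i; rewrite -val_eqE /= [RHS]ltn_neqAle andbC eq_sym.
Qed.

Lemma mem_class_cycle i y : y \in V i <-> exists t, y = S (r + i + t * k).
Proof. exact: mem_orbit_sv. Qed.

Lemma class_vertex i t a : a = r + i + t * k -> S a \in V i.
Proof. by move=> ->; apply/mem_class_cycle; exists t. Qed.

Lemma class_edge i t : [set S (r + i + t * k); S (r + i + t * k + k)] \in cedges (V i).
Proof. by rewrite /V -cycle_edges_cedges //; apply/mem_cycle_edges; exists t. Qed.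

Lemma class_cycle_disjoint i i' y : i < g -> i' < g -> y \in V i -> y \in V i' -> i = i'.
Proof.
move=> ig i'g /mem_class_cycle [t ->] /mem_class_cycle [t' /eqP].
by rewrite sv_eq //; move/eqP; apply: residue_class_unique.
Qed.

Lemma mem_flatten_classes m y :
  y \in flatten [seq V i | i <- iota 0 m] <-> exists2 i, i < m & y \in V i.
Proof.
split => [/flattenP [s /mapP [i]] | [i im yi]].
  by rewrite mem_iota add0n => im -> yi; exists i.
by apply/flattenP; exists (V i) => //; apply/map_f; rewrite mem_iota.
Qed.

Lemma classes_cover y :
  (exists2 i, i < g & y \in V i) <-> y \in [seq S a | a <- iota 0 n].
Proof.
split; last case/mapP => a _ ->.
  case=> i ig /mem_class_cycle [t ->].
  apply/mapP; exists ((r + i + t * k) %% n); last exact: sv_mod.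
  by rewrite mem_iota add0n ltn_pmod ?n_gt0.
have [i [t [ig a_it]]] := residue_class n_gt0 k_gt0 r a.
by exists i => //; apply/mem_class_cycle; exists t; apply/eqP; rewrite sv_eq // a_it.
Qed.

Lemma partial_edges0 : partial_edges 0 = cedges (V 0) :|: later_edges 0.
Proof.
have g_gt0 : 0 < g by rewrite gcdn_gt0 n_gt0.
rewrite /partial_edges /= (eq_bigr (fun i : 'I_g => cycle_edges (S (0 + i)))) //.
rewrite bigcup_cycle_edges -(bigcup_cycle_edges r) (bigD1 (Ordinal g_gt0)) //=.
rewrite /later_edges /V addn0 cycle_edges_cedges; congr (_ :|: _).
by apply: eq_big => [i|i _]; rewrite ?cycle_edges_cedges // -val_eqE /= lt0n.
Qed.

Lemma quad_meets_classes J e : e \in quad J ->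
  exists2 z, z \in e & (z \in V J) || (z \in V J.+1).
Proof.
have a_J : S (r + J) \in V J by apply: (class_vertex (t := 0)); lia.
have b_J : S (r + J + k) \in V J by apply: (class_vertex (t := 1)); lia.
have d_J1 : S (r + J + k + 1) \in V J.+1 by apply: (class_vertex (t := 1)); lia.
rewrite !inE -!orbA => /or4P [] /eqP ->.
- by exists (S (r + J)); rewrite ?a_J ?set21.
- by exists (S (r + J + k)); rewrite ?b_J ?set21.
- by exists (S (r + J + k + 1)); rewrite ?d_J1 ?orbT ?set22.
- by exists (S (r + J)); rewrite ?a_J ?set22.
Qed.

Lemma quad_later_disjoint J : {in quad J, forall e, e \notin later_edges J.+1}.
Proof.
move=> e /quad_meets_classes [z ze zJ]; apply/negP => /bigcupP [i Ji].
move/cedges_sub/subsetP/(_ z ze) => zi.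
have J1g : J.+1 < g by apply: ltn_trans Ji (ltn_ord i).
case/orP: zJ => /class_cycle_disjoint zJ.
  by have := zJ i (ltnW J1g) (ltn_ord i) zi; lia.
by have := zJ i J1g (ltn_ord i) zi; lia.
Qed.

(* The class edge [{s_(r+J+1), s_(r+J+1+k)}] is not an edge of the [J]-th
   4-cycle, so it survives the [J]-th merge. *)
Lemma class_edge_notin_quad J : J.+1 < g -> [set S (r + J.+1); S (r + J.+1 + k)] \notin quad J.
Proof.
move=> Jg; set e := [set _; _].
have /cedges_sub /subsetP eV : e \in cedges (V J.+1).
  by have := class_edge J.+1 0; rewrite mul0n addn0.
have outside z : z \in V J -> z \notin e.
  move=> zJ; apply/negP => /eV zJ1.
  by have := class_cycle_disjoint (ltnW Jg) Jg zJ zJ1; lia.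
have a_J : S (r + J) \in V J by apply: (class_vertex (t := 0)); lia.
have b_J : S (r + J + k) \in V J by apply: (class_vertex (t := 1)); lia.
apply/negP; rewrite !inE -!orbA => /or4P [] /eqP e_quad.
- by have := outside _ a_J; rewrite e_quad set21.
- by have := outside _ b_J; rewrite e_quad set21.
- have : S (r + J.+1) \in e by rewrite set21.
  rewrite e_quad => /set2P [] /eqP; apply/negP.
    by rewrite (_ : r + J + 2 * k + 1 = r + J.+1 + 2 * k) ?sv_neq; lia.
  by rewrite (_ : r + J + k + 1 = r + J.+1 + k) ?sv_neq; lia.
- by have := outside _ a_J; rewrite e_quad set22.
Qed.

Lemma merged_disjoint J c y : J.+1 < g ->
  perm_eq c (flatten [seq V i | i <- iota 0 J.+1]) -> y \in c -> y \notin V J.+1.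
Proof.
move=> Jg /perm_mem -> /mem_flatten_classes [i iJ yi]; apply/negP => yJ1.
by have := class_cycle_disjoint (ltn_trans iJ Jg) Jg yi yJ1; lia.
Qed.

Lemma merged_size J c : perm_eq c (flatten [seq V i | i <- iota 0 J.+1]) -> 3 <= size c.
Proof.
move/perm_size => ->; rewrite /= size_cat.
exact: leq_trans (size_orbit_sv _) (leq_addr _ _).
Qed.

(* The invariant after [J] merges: [c] is a single cycle through the classes
   [0..J] that still contains the class edge used by the next merge, and the
   current edge set consists of [c] and the classes not merged yet. *)
Definition merged J (c : seq (word n)) :=
  [/\ uniq c, perm_eq c (flatten [seq V i | i <- iota 0 J.+1]),
      [set S (r + J); S (r + J + k)] \in cedges c
    & partial_edges J = cedges c :|: later_edges J].

Lemma merged0 : merged 0 (V 0).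
Proof.
split; [exact: orbit_uniq | by rewrite /= cats0 | | exact: partial_edges0].
by have := class_edge 0 0; rewrite mul0n !addn0.
Qed.

(* The merge step: cut the current cycle at its edge [{a, b}] and class
   [J+1] at its edge [{c, d}], and reconnect them through [{b, c}] and [{d, a}],
   where [(a, b, c, d)] is the [J]-th 4-cycle. *)
Lemma merged_step J c : J.+1 < g -> merged J c -> exists c', merged J.+1 c'.
Proof.
move=> Jg [uc perm_c edge_c partial_c].
have [s1 [perm1 cedges1 last1]] := cycle_through_edge uc edge_c.
have edge_dc : [set S (r + J + 2 * k + 1); S (r + J + k + 1)] \in cedges (V J.+1).
  rewrite setUC (_ : r + J + 2 * k + 1 = r + J.+1 + 1 * k + k); last lia.
  by rewrite (_ : r + J + k + 1 = r + J.+1 + 1 * k) ?class_edge; lia.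
have [s2 [perm2 cedges2 last2]] := cycle_through_edge (orbit_uniq _ _) edge_dc.
set c' := (S (r + J + k) :: s1) ++ (S (r + J + k + 1) :: s2).
have size1 : 1 < size s1 by have := merged_size perm_c; rewrite -(perm_size perm1).
have size2 : 1 < size s2 by have := size_orbit_sv (r + J.+1); rewrite -(perm_size perm2).
have uc' : uniq c'.
  rewrite cat_uniq (perm_uniq perm1) (perm_uniq perm2) uc orbit_uniq andbT andTb.
  apply/hasPn => y; rewrite (perm_mem perm2) (perm_mem perm1) => yJ1.
  apply/negP => yc.
  by have := merged_disjoint Jg perm_c yc; rewrite yJ1.
have merge := cedges_merge uc' size1 size2.
rewrite last1 last2 cedges1 cedges2 quad_edges_merge -/(quad J) in merge.
exists c'; split => //.
- rewrite -[J.+2]addn1 iotaD map_cat flatten_cat /= cats0 perm_cat //.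
  exact: perm_trans perm1 perm_c.
- rewrite merge; apply/setUP; left; apply/setDP; split; last exact: class_edge_notin_quad.
  by apply/setUP; right; have := class_edge J.+1 0; rewrite mul0n addn0.
- rewrite partial_edgesS partial_c (later_edgesS Jg) setUA symdiffUl ?merge //.
  exact: quad_later_disjoint.
Qed.

Lemma merged_exists J : J < g -> exists c, merged J c.
Proof.
elim: J => [|J IH] Jg; first by exists (V 0); apply: merged0.
by have [c Jc] := IH (ltnW Jg); apply: merged_step Jc.
Qed.

Lemma merged_vertices c :
  perm_eq c (flatten [seq V i | i <- iota 0 g]) -> c =i [seq S a | a <- iota 0 n].
Proof.
move=> perm_c y; rewrite (perm_mem perm_c); apply/idP/idP.
  by move/mem_flatten_classes/classes_cover.
by move/classes_cover/mem_flatten_classes.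
Qed.

Lemma later_edges_last : later_edges g.-1 = set0.
Proof.
rewrite /later_edges big_pred0 // => i.
by rewrite ltnNge -ltnS prednK ?ltn_ord // gcdn_gt0 n_gt0.
Qed.

Lemma partial_edges_adj J e : e \in partial_edges J -> kneser_edge k e.
Proof.
case/mem_foldl_symdiff => [/bigcupP [i _ /mem_cycle_edges [t ->]] | [j _]].
  by apply: (kneser_edge_sv (d := k)); lia.
rewrite !inE -!orbA => /or4P [] /eqP ->.
- by apply: (kneser_edge_sv (d := k)); lia.
- by apply: (kneser_edge_sv (d := k + 1)); lia.
- by rewrite setUC; apply: (kneser_edge_sv (d := k)); lia.
- by rewrite setUC; apply: (kneser_edge_sv (d := k + 1)); lia.
Qed.

End MergeClasses.

End ShiftedBlocks.

Theorem mainTheorem12 (n k r : nat) :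
  0 < k -> 2 * k + 1 <= n -> r < n ->
  exists c : seq (word n),
    [/\ uniq c, 2 < size c,
        c =i [seq sv n k i | i <- iota 0 n],
        cycle (@kneser_adj n k) c
      & result_edges n k r = seq_cycle_edges c].
Proof.
move=> k_gt0; rewrite addn1 => two_k_lt_n _.
have last_class : (gcdn n k).-1 < gcdn n k by rewrite ltn_predL gcdn_gt0 (n_gt0 two_k_lt_n).
have [c [uc perm_c _ final]] := merged_exists k_gt0 two_k_lt_n r last_class.
rewrite later_edges_last // setU0 in final.
exists c; split.
- exact: uc.
- exact: merged_size perm_c.
- by rewrite (ltn_predK last_class) in perm_c; apply: merged_vertices perm_c.
- (* consecutive words of [c] form edges of the final edge set, hence of [K(n,k)] *)
  apply: cycle_from_next => // y yc.
  have : [set y; next c y] \in partial_edges n k r (gcdn n k).-1.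
    by rewrite final; apply/imsetP; exists y.
  case/partial_edges_adj => // x [z [/set2_inj [[-> ->]|[-> ->]] adj]] //.
  by rewrite kneser_adj_sym.
-
  exact: final.
Qed.
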